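(* Let $H$ be the graph consisting of two vertex-disjoint triangles $v_1v_2v_3$ and $w_1w_2w_3$ together with the edge $v_3w_1$. Let $n\ge 7$ and let $G$ be a graph with $n$ vertices obtained from $H$ by attaching $n-6$ pendant edges (new leaves) to vertices of $H$, such that both $v_3$ and $w_1$ are incident with at least one pendant edge. Then $\operatorname{avm}(G)>\operatorname{avm}(T_n^1(3,3))$.
   Context: $\operatorname{avm}(G)$ is the average of $|M|$ over all maximal matchings $M$ of $G$ (a matching is maximal if not properly contained in another matching). $T_n^1(3,3)$ is the graph obtained from $H$ by attaching $n-6$ pendant edges (new leaves) to $v_3$. *)

From mathcomp Require Import all_boot all_order all_algebra.
Set Implicit Arguments. Unset Strict Implicit. Unset Printing Implicit Defensive.
Import Order.TTheory GRing.Theory Num.Theory.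

Section Matchings.
Variables (T : finType) (e : rel T).

Definition is_edge (s : {set T}) : bool :=
  [exists x, exists y, [&& s == [set x; y], x != y & e x y]].

Definition matching (M : {set {set T}}) : bool :=
  [forall s in M, is_edge s] &&
  [forall s in M, forall t in M, (s != t) ==> [disjoint s & t]].

Definition maximal_matching (M : {set {set T}}) : bool :=
  matching M && ~~ [exists N, matching N && (M \proper N)].

Definition avm : rat :=
  ((\sum_(M : {set {set T}} | maximal_matching M) #|M|)%:R
     / #|[set M : {set {set T}} | maximal_matching M]|%:R)%R.
End Matchings.

(* Vertices of H: 0 = v1, 1 = v2, 2 = v3, 3 = w1, 4 = w2, 5 = w3. *)
Definition Hedge (a b : nat) : bool :=
  [|| [&& a < 3, b < 3 & a != b],
      [&& 3 <= a, a < 6, 3 <= b, b < 6 & a != b]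
    | ((a == 2) && (b == 3)) || ((a == 3) && (b == 2))].

Definition v3 : 'I_6 := @Ordinal 6 2 isT.
Definition w1 : 'I_6 := @Ordinal 6 3 isT.

(* Graph on 'I_n: vertices 0..5 form H; each vertex i >= 6 is a leaf
   adjacent only to the H-vertex att i. *)
Definition Gedge (n : nat) (att : 'I_n -> 'I_6) : rel 'I_n :=
  fun x y =>
    [|| [&& (x < 6)%N, (y < 6)%N & Hedge x y],
        [&& (6 <= x)%N, (y < 6)%N & (att x : nat) == y]
      | [&& (6 <= y)%N, (x < 6)%N & (att y : nat) == x]].

Definition Tn1_33 (n : nat) : rel 'I_n := @Gedge n (fun _ : 'I_n => v3).
Arguments Tn1_33 n : clear implicits.

From mathcomp Require Import all_boot all_order all_algebra.
From mathcomp Require Import ring zify.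
Set Implicit Arguments. Unset Strict Implicit. Unset Printing Implicit Defensive.
Import Order.TTheory GRing.Theory Num.Theory.

(* A maximal matching of G is determined by the edges of H it contains together with, at
   each vertex of H left uncovered by them, the pendant edge matched there (there is one
   exactly when the vertex carries pendant edges).  Summing over the 128 edge sets of H
   gives the number D of maximal matchings and the sum N of their sizes as polynomials in
   the numbers of pendant edges at the six vertices of H.  For T_n^1(3,3), with m = n - 6,
   D = 3m + 7 and N = 9m + 15, so its average is 3 - 6/(3m + 7) < 3.  For G, with c, c' >= 1
   pendant edges at v3 and w1, already N >= 3D as soon as some pendant edge sits at v1, v2,
   w2 or w3; otherwise (3m + 7) N - (9m + 15) D = (3m + 13) c c' + 2 > 0. *)


Section Matchings.
Variables (T : finType) (e : rel T).

Lemma is_edgeP (s : {set T}) :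
  reflect (exists x y, [/\ s = [set x; y], x != y & e x y]) (is_edge e s).
Proof.
apply: (iffP existsP) => [[x /existsP[y /and3P[/eqP-> ? ?]]]|[x [y [-> ? ?]]]].
  by exists x, y.
by exists x; apply/existsP; exists y; rewrite eqxx /=; apply/andP.
Qed.

Lemma matchingP (M : {set {set T}}) :
  reflect ((forall s, s \in M -> is_edge e s) /\
           (forall s t x, s \in M -> t \in M -> x \in s -> x \in t -> s = t))
          (matching e M).
Proof.
apply: (iffP andP) => [[/forallP edgeM /forallP disjM]|[edgeM disjM]]; split.
- by move=> s sM; have := edgeM s; rewrite sM.
- move=> s t x sM tM xs xt; apply/eqP; apply: contraT => st.
  have := disjM s; rewrite sM => /forallP/(_ t); rewrite tM st => /= dst.
  by rewrite (disjointFr dst xs) in xt.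
- by apply/forallP => s; apply/implyP; apply: edgeM.
- apply/forallP => s; apply/implyP => sM; apply/forallP => t; apply/implyP => tM.
  apply/implyP => st; apply/pred0P => x /=; apply/negP => /andP[xs xt].
  by rewrite (disjM s t x sM tM xs xt) eqxx in st.
Qed.

Lemma maximal_matchingE (M : {set {set T}}) :
  maximal_matching e M =
  matching e M && [forall x, forall y, (e x y && (x != y)) ==>
     [exists s in M, (x \in s) || (y \in s)]].
Proof.
rewrite /maximal_matching; case mM: (matching e M) => //=.
move/matchingP: mM => [edgeM disjM]; apply/idP/idP.
- move=> noN; apply/forallP => x; apply/forallP => y; apply/implyP => /andP[exy xy].
  apply: contraNT noN => uncov; apply/existsP; exists ([set x; y] |: M).
  have freeM s : s \in M -> (x \notin s) && (y \notin s).
    move=> sM; apply: contraNT uncov; rewrite negb_and !negbK => xys.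
    by apply/existsP; exists s; rewrite sM.
  apply/andP; split.
    apply/matchingP; split.
      move=> s; rewrite in_setU1 => /orP[/eqP->|]; last exact: edgeM.
      by apply/is_edgeP; exists x, y.
    move=> s t z; rewrite !in_setU1 => /orP[/eqP->|sM] /orP[/eqP->|tM] // zs zt.
    + have := freeM t tM; move: zs; rewrite !inE => /orP[]/eqP<-; by rewrite zt ?andbF.
    + have := freeM s sM; move: zt; rewrite !inE => /orP[]/eqP<-; by rewrite zs ?andbF.
    + exact: disjM zs zt.
  apply/properP; split; first exact: subsetUr.
  exists [set x; y]; first by rewrite setU11.
  by apply/negP => /freeM; rewrite !inE eqxx.
- move=> /forallP cov; apply/negP => /existsP[N /andP[/matchingP[edgeN disjN]]].
  case/properP => MN [s sN sM].
  have /is_edgeP[x [y [sxy xy exy]]] := edgeN s sN.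
  have /existsP[t /andP[tM xyt]] := implyP (forallP (cov x) y) (introT andP (conj exy xy)).
  have tN : t \in N := subsetP MN t tM.
  suff st : s = t by rewrite st tM in sM.
  have xs : x \in s by rewrite sxy !inE eqxx.
  have ys : y \in s by rewrite sxy !inE eqxx orbT.
  by case/orP: xyt => [xt|yt]; [exact: disjN sN tN xs xt | exact: disjN sN tN ys yt].
Qed.

End Matchings.

(* The seven edges of H; edge 6 is the bridge v3 w1. *)
Definition hend1 (j : nat) : nat := nth 0 [:: 0; 1; 0; 3; 4; 3; 2] j.
Definition hend2 (j : nat) : nat := nth 0 [:: 1; 2; 2; 4; 5; 5; 3] j.

Lemma hend_lt6 j : j < 7 -> [&& hend1 j < 6, hend2 j < 6 & hend1 j != hend2 j].
Proof. by move: j; do 7! case=> //. Qed.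

Lemma Hedge_hend j : j < 7 -> Hedge (hend1 j) (hend2 j).
Proof. by move: j; do 7! case=> //. Qed.

Lemma Hedge_lt6 u w : Hedge u w -> (u < 6) && (w < 6).
Proof.
case/or3P=> [/and3P[u3 w3 _]|/and5P[_ -> _ -> _]|/orP[]/andP[/eqP-> /eqP->]] //.
by rewrite (ltn_trans u3) ?(ltn_trans w3).
Qed.

Definition is_hend (j u w : nat) : bool :=
  ((hend1 j == u) && (hend2 j == w)) || ((hend1 j == w) && (hend2 j == u)).

Lemma hend_of_Hedge u w : Hedge u w -> exists2 j, j < 7 & is_hend j u w.
Proof.
move=> uw; have /andP[u6 w6] := Hedge_lt6 uw.
have table : all (fun u => all (fun w => Hedge u w ==>
    has (fun j => is_hend j u w) (iota 0 7)) (iota 0 6)) (iota 0 6) by [].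
have := allP table u; rewrite mem_iota u6 => /(_ isT) /allP /(_ w).
by rewrite mem_iota w6 uw => /(_ isT) /hasP[j]; rewrite mem_iota; exists j.
Qed.

Lemma hend_inj j k : j < 7 -> k < 7 ->
  (hend1 j == hend1 k) || (hend1 j == hend2 k) ->
  (hend2 j == hend1 k) || (hend2 j == hend2 k) -> j = k.
Proof.
move=> j7 k7; have table : all (fun j => all (fun k =>
   ((hend1 j == hend1 k) || (hend1 j == hend2 k)) ==>
   ((hend2 j == hend1 k) || (hend2 j == hend2 k)) ==> (j == k)) (iota 0 7)) (iota 0 7).
  by [].
have := allP table j; rewrite mem_iota j7 => /(_ isT) /allP /(_ k).
by rewrite mem_iota k7 => /(_ isT) /implyP jk /jk /implyP kj /kj /eqP.
Qed.

(* A set of edges of H, as seven bits; nested pairs make sums over patterns expand by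
   computation. *)
Definition hpattern := (bool * bool * bool * bool * bool * bool * bool)%type.

Definition selected (p : hpattern) (j : nat) : bool :=
  let: (b0, b1, b2, b3, b4, b5, b6) := p in nth false [:: b0; b1; b2; b3; b4; b5; b6] j.

Definition pattern_of (f : nat -> bool) : hpattern := (f 0, f 1, f 2, f 3, f 4, f 5, f 6).

Lemma selected_pattern_of f j : j < 7 -> selected (pattern_of f) j = f j.
Proof. by move: j; do 7! case=> //. Qed.

Lemma pattern_ofK p : pattern_of (selected p) = p.
Proof. by case: p => [[[[[[? ?] ?] ?] ?] ?] ?]. Qed.

Lemma eq_pattern_of (f g : nat -> bool) :
  (forall j, j < 7 -> f j = g j) -> pattern_of f = pattern_of g.
Proof. by move=> fg; rewrite /pattern_of !fg. Qed.

Lemma selected_lt7 p j : selected p j -> j < 7.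
Proof.
case: p => [[[[[[? ?] ?] ?] ?] ?] ?]; apply: contraTT; rewrite -leqNgt => j7.
by rewrite /selected nth_default.
Qed.

Definition covered (p : hpattern) (v : nat) : bool :=
  has (fun j => selected p j && ((v == hend1 j) || (v == hend2 j))) (iota 0 7).

Definition hedges_disjoint (j k : nat) : bool :=
  [&& hend1 j != hend1 k, hend1 j != hend2 k, hend2 j != hend1 k & hend2 j != hend2 k].

Definition hmatching (p : hpattern) : bool :=
  all (fun j => all (fun k => (j != k) ==> (selected p j && selected p k) ==>
    hedges_disjoint j k) (iota 0 7)) (iota 0 7).

(* [p] can be the H-part of a maximal matching: it is a matching of H and every edge of H
   has an endpoint covered by [p] or carrying a pendant edge ([leafless] marks the vertices
   without one). *)
Definition admissible (leafless : nat -> bool) (p : hpattern) : bool :=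
  hmatching p && all (fun j => ~~ [&& ~~ covered p (hend1 j), ~~ covered p (hend2 j),
                                    leafless (hend1 j) & leafless (hend2 j)]) (iota 0 7).

Lemma coveredP p v :
  reflect (exists2 j, selected p j & (v == hend1 j) || (v == hend2 j)) (covered p v).
Proof.
apply: (iffP hasP) => [[j _ /andP[]]|[j pj vj]]; first by exists j.
by exists j; rewrite ?pj // mem_iota (selected_lt7 pj).
Qed.

Lemma hmatchingP p : reflect
  (forall j k, selected p j -> selected p k -> j != k -> hedges_disjoint j k) (hmatching p).
Proof.
apply: (iffP allP) => [disj j k pj pk jk|disj j _].
  have := disj j; rewrite mem_iota (selected_lt7 pj) => /(_ isT) /allP /(_ k).
  by rewrite mem_iota (selected_lt7 pk) jk pj pk => /(_ isT).
by apply/allP => k _; apply/implyP => jk; apply/implyP => /andP[pj pk]; apply: disj.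
Qed.

(* [f v] is the number of pendant edges at the vertex v of H; [pattern_weight f p] counts
   the ways to complete the H-edges [p] to a maximal matching, and [pattern_size f p] is the
   size of each completion. *)
Definition vertex_weight (f : nat -> nat) (p : hpattern) (v : nat) : nat :=
  if covered p v || (f v == 0) then 1 else f v.
Definition leaf_used (f : nat -> nat) (p : hpattern) (v : nat) : nat :=
  ~~ (covered p v || (f v == 0)).

Definition pattern_weight (f : nat -> nat) (p : hpattern) : nat :=
  vertex_weight f p 0 * vertex_weight f p 1 * vertex_weight f p 2 *
  vertex_weight f p 3 * vertex_weight f p 4 * vertex_weight f p 5.
Definition pattern_size (f : nat -> nat) (p : hpattern) : nat :=
  selected p 0 + selected p 1 + selected p 2 + selected p 3 + selected p 4 +
  selected p 5 + selected p 6 +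
  (leaf_used f p 0 + leaf_used f p 1 + leaf_used f p 2 +
   leaf_used f p 3 + leaf_used f p 4 + leaf_used f p 5).

Definition mm_count (f : nat -> nat) : nat :=
  \sum_(p | admissible (fun v => f v == 0) p) pattern_weight f p.
Definition mm_size_sum (f : nat -> nat) : nat :=
  \sum_(p | admissible (fun v => f v == 0) p) pattern_size f p * pattern_weight f p.

Lemma sum_prod_bool (A : finType) (F : A * bool -> nat) :
  \sum_(p : A * bool) F p = \sum_(a : A) (F (a, true) + F (a, false)).
Proof.
rewrite (eq_bigr (fun p => F (p.1, p.2))) => [|[]//].
by rewrite -(pair_bigA _ (fun a b => F (a, b))); apply: eq_bigr => a _; rewrite big_bool.
Qed.

Ltac expand_patterns :=
  rewrite /mm_count /mm_size_sum /admissible !big_mkcond !sum_prod_bool !big_bool /=;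
  rewrite /pattern_weight /pattern_size /vertex_weight /leaf_used /=.

Lemma pattern_weightE (f : nat -> nat) p : \prod_(v < 6) vertex_weight f p v = pattern_weight f p.
Proof. by rewrite !big_ord_recr big_ord0 /= mul1n. Qed.

Lemma pattern_sizeE (f : nat -> nat) p :
  #|[set j : 'I_7 | selected p j]| + #|[set v : 'I_6 | ~~ (covered p v || (f v == 0))]| =
  pattern_size f p.
Proof.
have card_setE k (P : pred 'I_k) : #|[set j | P j]| = \sum_(j < k) (P j : nat).
  by rewrite -sum1_card big_mkcond; apply: eq_bigr => j _; rewrite inE; case: (P j).
by rewrite !card_setE !big_ord_recr !big_ord0 /= !add0n.
Qed.

Section Encoding.
Variables (n' : nat) (hn : 6 <= n') (att : 'I_n'.+1 -> 'I_6).
Local Notation n := n'.+1.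
Local Notation G := (Gedge att).

Definition hvert (k : nat) : 'I_n := inord k.

Lemma hvertK k : k < 6 -> hvert k = k :> nat.
Proof. by move=> k6; rewrite /hvert inordK // ltnS (leq_trans (ltnW k6) hn). Qed.

Lemma hvert_val (x : 'I_n) : x < 6 -> hvert x = x.
Proof. by move=> x6; apply: val_inj; rewrite /= hvertK. Qed.

Lemma hvert_inj k l : k < 6 -> l < 6 -> (hvert k == hvert l) = (k == l).
Proof.
by move=> k6 l6; apply/eqP/eqP => [kl|->] //; rewrite -(hvertK k6) -(hvertK l6) kl.
Qed.

Lemma hvert_neq_leaf k (l : 'I_n) : k < 6 -> 6 <= l -> hvert k != l.
Proof. by move=> k6 l6; apply: contraTneq l6 => <-; rewrite hvertK // -ltnNge. Qed.

Lemma Gedge_hvert k l : k < 6 -> l < 6 -> G (hvert k) (hvert l) = Hedge k l.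
Proof.
by move=> k6 l6; rewrite /Gedge !hvertK // k6 l6 (ltn_geF k6) (ltn_geF l6) /= !orbF.
Qed.

Lemma Gedge_leaf (l : 'I_n) : 6 <= l -> G l (hvert (att l)) && G (hvert (att l)) l.
Proof.
move=> l6; have a6 := ltn_ord (att l).
by rewrite /Gedge hvertK // l6 a6 (ltn_geF a6) eqxx !orbT.
Qed.

Definition hedge (j : nat) : {set 'I_n} := [set hvert (hend1 j); hvert (hend2 j)].
Definition leaf_edge (l : 'I_n) : {set 'I_n} := [set hvert (att l); l].

Lemma Gedge_edge_cases s : is_edge G s ->
  (exists2 j, j < 7 & s = hedge j) \/ (exists2 l : 'I_n, 6 <= l & s = leaf_edge l).
Proof.
case/is_edgeP => x [y [-> xy]]; rewrite /Gedge.
case/or3P => [/and3P[x6 y6 /hend_of_Hedge[j j7 /orP[]/andP[/eqP e1 /eqP e2]]]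
             |/and3P[x6 y6 /eqP axy]|/and3P[y6 x6 /eqP ayx]].
- by left; exists j; rewrite // /hedge e1 e2 !hvert_val.
- by left; exists j; rewrite // /hedge e1 e2 !hvert_val // setUC.
- by right; exists x; rewrite // /leaf_edge axy hvert_val // setUC.
- by right; exists y; rewrite // /leaf_edge ayx hvert_val.
Qed.

Lemma hedge_lt6 j z : j < 7 -> z \in hedge j -> z < 6.
Proof. by case/hend_lt6/and3P => h1 h2 _; rewrite !inE => /orP[]/eqP->; rewrite hvertK. Qed.

Lemma hvert_in_hedge j k : j < 7 -> k < 6 ->
  (hvert k \in hedge j) = (k == hend1 j) || (k == hend2 j).
Proof. by case/hend_lt6/and3P => h1 h2 _ k6; rewrite !inE !hvert_inj. Qed.

Lemma leaf_in_leaf_edge (l z : 'I_n) : 6 <= z -> (z \in leaf_edge l) = (z == l).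
Proof. by move=> z6; rewrite !inE eq_sym (negbTE (hvert_neq_leaf (ltn_ord _) z6)). Qed.

Lemma hvert_in_leaf_edge (l : 'I_n) k : k < 6 -> 6 <= l ->
  (hvert k \in leaf_edge l) = (k == att l).
Proof.
by move=> k6 l6; rewrite !inE hvert_inj ?ltn_ord // (negbTE (hvert_neq_leaf k6 l6)) orbF.
Qed.

Lemma is_edge_hedge j : j < 7 -> is_edge G (hedge j).
Proof.
move=> j7; have /and3P[h1 h2 h12] := hend_lt6 j7.
apply/is_edgeP; exists (hvert (hend1 j)), (hvert (hend2 j)).
by rewrite hvert_inj // Gedge_hvert // Hedge_hend.
Qed.

Lemma is_edge_leaf_edge (l : 'I_n) : 6 <= l -> is_edge G (leaf_edge l).
Proof.
move=> l6; apply/is_edgeP; exists (hvert (att l)), l.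
by rewrite hvert_neq_leaf ?ltn_ord //; case/andP: (Gedge_leaf l6).
Qed.

Lemma hedge_inj j k : j < 7 -> k < 7 -> hedge j = hedge k -> j = k.
Proof.
move=> j7 k7 jk; have /and3P[h1 h2 _] := hend_lt6 j7.
apply: hend_inj => //; rewrite -hvert_in_hedge // -jk !inE eqxx ?orbT //.
Qed.

Lemma leaf_edge_inj (l l' : 'I_n) : 6 <= l -> leaf_edge l = leaf_edge l' -> l = l'.
Proof.
move=> l6 ll'; have : l \in leaf_edge l' by rewrite -ll' !inE eqxx orbT.
by rewrite leaf_in_leaf_edge // => /eqP.
Qed.

Lemma hedge_neq_leaf_edge j (l : 'I_n) : j < 7 -> 6 <= l -> hedge j != leaf_edge l.
Proof.
move=> j7 l6; apply/negP => /eqP jl.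
have : l \in hedge j by rewrite jl !inE eqxx orbT.
by move/(hedge_lt6 j7); rewrite ltnNge l6.
Qed.

Definition nleaves (k : nat) : nat := #|[set x : 'I_n | (6 <= x) && (att x == k :> nat)]|.
Definition leafless (k : nat) : bool := nleaves k == 0.

Lemma leafless_attF (l : 'I_n) : 6 <= l -> leafless (att l) = false.
Proof.
move=> l6; rewrite /leafless /nleaves; apply/negbTE; rewrite -lt0n card_gt0.
by apply/set0Pn; exists l; rewrite inE l6 eqxx.
Qed.

Definition leaf_choices (p : hpattern) (v : 'I_6) : pred (option 'I_n) :=
  if covered p v || leafless v then pred1 None
  else [pred o : option 'I_n | if o is Some x then (6 <= x) && (att x == v) else false].
Definition code_ok (q : hpattern * {ffun 'I_6 -> option 'I_n}) : bool :=
  admissible leafless q.1 && (q.2 \in family (leaf_choices q.1)).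
Definition decode (q : hpattern * {ffun 'I_6 -> option 'I_n}) : {set {set 'I_n}} :=
  [set hedge j | j : 'I_7 & selected q.1 j] :|:
  [set leaf_edge l | l : 'I_n & (6 <= l) && (q.2 (att l) == Some l)].
Definition leaf_choice (M : {set {set 'I_n}}) : {ffun 'I_6 -> option 'I_n} :=
  [ffun v : 'I_6 => [pick x : 'I_n | (6 <= x) && ([set hvert v; x] \in M)]].
Definition encode (M : {set {set 'I_n}}) : hpattern * {ffun 'I_6 -> option 'I_n} :=
  (pattern_of (fun j => hedge j \in M), leaf_choice M).

Lemma att_of_matched_leaf (M : {set {set 'I_n}}) (v : 'I_6) (x : 'I_n) : matching G M ->
  6 <= x -> [set hvert v; x] \in M -> att x = v.
Proof.
move=> /matchingP[edgeM _] x6 vxM.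
case: (Gedge_edge_cases (edgeM _ vxM)) => [[j j7 vxj]|[l l6 vxl]].
  have : x \in hedge j by rewrite -vxj !inE eqxx orbT.
  by move/(hedge_lt6 j7); rewrite ltnNge x6.
have : x \in leaf_edge l by rewrite -vxl !inE eqxx orbT.
rewrite leaf_in_leaf_edge // => /eqP xl; subst l.
have : hvert v \in leaf_edge x by rewrite -vxl !inE eqxx.
by rewrite hvert_in_leaf_edge // => /eqP vx; apply: val_inj.
Qed.

Lemma selected_encode (M : {set {set 'I_n}}) j :
  selected (encode M).1 j = (j < 7) && (hedge j \in M).
Proof.
case: (ltnP j 7) => j7; first by rewrite selected_pattern_of.
by apply/negP => /selected_lt7; rewrite ltnNge j7.
Qed.

Lemma encodeK (M : {set {set 'I_n}}) : matching G M -> decode (encode M) = M.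
Proof.
move=> mM; have /matchingP[edgeM disjM] := mM.
apply/setP => s; apply/idP/idP.
- rewrite inE => /orP[/imsetP[j jS ->]|/imsetP[l lS ->]].
    by move: jS; rewrite inE selected_encode => /andP[].
  move: lS; rewrite inE => /andP[l6]; rewrite /leaf_choice ffunE.
  by case: pickP => [x /andP[x6 xM]|_] // /eqP[xl]; subst x.
- move=> sM; rewrite inE; case: (Gedge_edge_cases (edgeM _ sM)) => [[j j7 sj]|[l l6 sl]].
    apply/orP; left; apply/imsetP; exists (Ordinal j7) => //.
    by rewrite inE selected_encode j7 -sj.
  apply/orP; right; apply/imsetP; exists l => //.
  rewrite inE l6 /= /leaf_choice ffunE; case: pickP => [x /andP[x6 xM]|none].
    have xs : [set hvert (att l); x] = s.
      by apply: (disjM _ _ (hvert (att l)) xM sM); rewrite ?sl !inE eqxx.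
    have : x \in s by rewrite -xs !inE eqxx orbT.
    by rewrite sl leaf_in_leaf_edge // => /eqP->.
  by move: (none l); rewrite l6 -[[set _; l]]/(leaf_edge l) -sl sM.
Qed.

Lemma covered_encodeP (M : {set {set 'I_n}}) u : u < 6 ->
  reflect (exists2 j, j < 7 & (hedge j \in M) && (hvert u \in hedge j)) (covered (encode M).1 u).
Proof.
move=> u6; apply: (iffP (coveredP _ _)) => [[j]|[j j7 /andP[jM uj]]].
  by rewrite selected_encode => /andP[j7 jM] uj; exists j => //; rewrite jM hvert_in_hedge.
by exists j; rewrite ?selected_encode ?j7 ?jM // -hvert_in_hedge.
Qed.

Lemma encode_hmatching (M : {set {set 'I_n}}) : matching G M -> hmatching (encode M).1.
Proof.
case/matchingP => _ disjM; apply/hmatchingP => j k.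
rewrite !selected_encode => /andP[j7 jM] /andP[k7 kM] jk.
have /and3P[j1 j2 _] := hend_lt6 j7.
have apart u : u < 6 -> (u == hend1 j) || (u == hend2 j) ->
    (u == hend1 k) || (u == hend2 k) -> False.
  by move=> u6; rewrite -!hvert_in_hedge // => uj uk; move: jk;
    rewrite (hedge_inj j7 k7 (disjM _ _ _ jM kM uj uk)) eqxx.
by apply/and4P; split; apply/negP => /eqP jk1;
  [apply: (apart (hend1 j)) | apply: (apart (hend1 j)) | apply: (apart (hend2 j))
  | apply: (apart (hend2 j))] => //; rewrite ?jk1 eqxx ?orbT.
Qed.

Lemma encode_admissible (M : {set {set 'I_n}}) :
  maximal_matching G M -> admissible leafless (encode M).1.
Proof.
rewrite maximal_matchingE => /andP[mM /forallP cov].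
have /matchingP[edgeM _] := mM.
rewrite /admissible encode_hmatching //; apply/allP => j; rewrite mem_iota add0n /= => j7.
apply/negP => /and4P[nc1 nc2 z1 z2]; have /and3P[j1 j2 j12] := hend_lt6 j7.
move: (cov (hvert (hend1 j))) => /forallP/(_ (hvert (hend2 j))).
rewrite Gedge_hvert // Hedge_hend // hvert_inj // j12 /= => /existsP[s /andP[sM js]].
case: (Gedge_edge_cases (edgeM _ sM)) => [[k k7 sk]|[l l6 sl]]; subst s.
  by case/orP: js => ujk; [move/negP: nc1 | move/negP: nc2]; apply;
    apply/covered_encodeP => //; exists k; rewrite ?sM.
by case/orP: js; rewrite hvert_in_leaf_edge // => /eqP jl;
  [move: z1 | move: z2]; rewrite jl leafless_attF.
Qed.

Lemma maximal_matched_leaf (M : {set {set 'I_n}}) (v : 'I_6) : maximal_matching G M ->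
  ~~ covered (encode M).1 v -> ~~ leafless v -> exists2 x : 'I_n, 6 <= x & [set hvert v; x] \in M.
Proof.
rewrite maximal_matchingE => /andP[mM /forallP cov] nc.
have /matchingP[edgeM _] := mM.
rewrite /leafless /nleaves -lt0n card_gt0 => /set0Pn[l]; rewrite inE => /andP[l6 /eqP alv].
have {}alv : att l = v by apply: val_inj.
move: (cov l) => /forallP/(_ (hvert (att l))).
case/andP: (Gedge_leaf l6) => -> _; rewrite eq_sym hvert_neq_leaf ?ltn_ord //=.
case/existsP => s /andP[sM ls].
case: (Gedge_edge_cases (edgeM _ sM)) => [[k k7 sk]|[l' l'6 sl']]; subst s.
  case/orP: ls => [/(hedge_lt6 k7)|vk]; first by rewrite ltnNge l6.
  by case/negP: nc; apply/covered_encodeP; rewrite ?ltn_ord //; exists k; rewrite -?alv ?sM.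
exists l' => //; suff -> : [set hvert v; l'] = leaf_edge l' by [].
case/orP: ls => [|lv]; first by rewrite leaf_in_leaf_edge // => /eqP <-; rewrite /leaf_edge alv.
move: lv; rewrite hvert_in_leaf_edge ?ltn_ord // alv => /eqP/val_inj al'.
by rewrite /leaf_edge -al'.
Qed.

Lemma encode_choices (M : {set {set 'I_n}}) : maximal_matching G M ->
  (encode M).2 \in family (leaf_choices (encode M).1).
Proof.
move=> maxM; have mM : matching G M by case/andP: maxM.
have /matchingP[_ disjM] := mM.
apply/familyP => v; rewrite /leaf_choices /= ffunE.
case: pickP => [x /andP[x6 vxM]|none].
  have ax := att_of_matched_leaf mM x6 vxM.
  case: ifP => [/orP[|]|_]; last by rewrite inE /= x6 ax eqxx.
    case/covered_encodeP; rewrite ?ltn_ord // => j j7 /andP[jM vj].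
    have vx : hvert v \in [set hvert v; x] by rewrite !inE eqxx.
    have : x \in hedge j by rewrite -(disjM _ _ _ vxM jM vx vj) !inE eqxx orbT.
    by move/(hedge_lt6 j7); rewrite ltnNge x6.
  by rewrite -ax leafless_attF.
case: ifP => [_|/norP[nc nz]]; first by rewrite inE.
by have [x x6 vxM] := maximal_matched_leaf maxM nc nz; move: (none x); rewrite x6 vxM.
Qed.

Section Decode.
Variables (p : hpattern) (phi : {ffun 'I_6 -> option 'I_n}).
Hypotheses (adm : admissible leafless p) (fam : phi \in family (leaf_choices p)).

Lemma choice_none (v : 'I_6) : covered p v || leafless v -> phi v = None.
Proof. by move=> c; have /familyP/(_ v) := fam; rewrite /leaf_choices c inE => /eqP. Qed.

Lemma choice_some (v : 'I_6) : ~~ (covered p v || leafless v) ->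
  exists2 l : 'I_n, phi v = Some l & (6 <= l) && (att l == v).
Proof.
move=> c; have /familyP/(_ v) := fam; rewrite /leaf_choices (negbTE c) inE.
by case: (phi v) => // l; exists l.
Qed.

Lemma choice_leaf (v : 'I_6) (l : 'I_n) : phi v = Some l -> (6 <= l) && (att l == v).
Proof.
move=> vl; have [/choice_none|/choice_some[l' vl']] := boolP (covered p v || leafless v).
  by rewrite vl.
by move: vl; rewrite vl' => -[<-].
Qed.

Lemma in_decode s : (s \in decode (p, phi)) =
  (s \in [set hedge j | j : 'I_7 & selected p j]) ||
  (s \in [set leaf_edge l | l : 'I_n & (6 <= l) && (phi (att l) == Some l)]).
Proof. by rewrite inE. Qed.

Lemma decode_covers u : u < 6 -> covered p u || ~~ leafless u ->
  exists2 s, s \in decode (p, phi) & hvert u \in s.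
Proof.
move=> u6; have [pu _|npu] := boolP (covered p u).
  case/coveredP: pu => j pj uj; have j7 := selected_lt7 pj.
  exists (hedge j); last by rewrite hvert_in_hedge.
  by rewrite in_decode; apply/orP; left; apply/imsetP; exists (Ordinal j7); rewrite ?inE.
move=> /= nzu.
have [|l ul /andP[l6 /eqP al]] := @choice_some (Ordinal u6); first by rewrite /= negb_or npu nzu.
exists (leaf_edge l); last by rewrite hvert_in_leaf_edge // al.
by rewrite in_decode; apply/orP; right; apply/imsetP; exists l; rewrite // inE l6 al ul eqxx.
Qed.

Lemma decode_matching : matching G (decode (p, phi)).
Proof.
apply/matchingP; split.
  move=> s; rewrite in_decode => /orP[/imsetP[j _ ->]|/imsetP[l]].
    exact: is_edge_hedge (ltn_ord j).
  by rewrite inE => /andP[l6 _] ->; apply: is_edge_leaf_edge.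
have hvert_covered (j : 'I_7) (l : 'I_n) z : selected p j -> 6 <= l ->
    z \in hedge j -> z \in leaf_edge l -> covered p (att l).
  move=> pj l6 zj zl; have z6 := hedge_lt6 (ltn_ord j) zj.
  move: zj zl; rewrite -(hvert_val z6) hvert_in_hedge // hvert_in_leaf_edge // => zj /eqP <-.
  by apply/coveredP; exists j.
move=> s t z; rewrite !in_decode.
case/orP=> [/imsetP[j pj ->]|/imsetP[l pl ->]];
  case/orP=> [/imsetP[k pk ->]|/imsetP[l' pl' ->]] zs zt.
- rewrite !inE in pj pk; case: (eqVneq j k) => [->//|jk]; exfalso.
  have z6 := hedge_lt6 (ltn_ord j) zs.
  move: zs zt; rewrite -(hvert_val z6) !hvert_in_hedge //.
  have /and4P[] := hmatchingP _ (andP adm).1 j k pj pk jk.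
  move=> /negPf d1 /negPf d2 /negPf d3 /negPf d4.
  by case/orP=> /eqP->; rewrite ?d1 ?d2 ?d3 ?d4.
- rewrite !inE in pj pl'; case/andP: pl' => l6 /eqP al; exfalso.
  by move: al; rewrite choice_none // (hvert_covered j l' z).
- rewrite !inE in pk pl; case/andP: pl => l6 /eqP al; exfalso.
  by move: al; rewrite choice_none // (hvert_covered k l z).
- rewrite !inE in pl pl'; case/andP: pl => l6 /eqP al; case/andP: pl' => l'6 /eqP al'.
  have [z6|z6] := leqP 6 z.
    by move: zs zt; rewrite !leaf_in_leaf_edge // => /eqP <- /eqP <-.
  move: zs zt; rewrite -(hvert_val z6) !hvert_in_leaf_edge // => /eqP zl /eqP zl'.
  have att_ll' : att l = att l' by apply: val_inj; rewrite /= -zl -zl'.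
  by move: al'; rewrite -att_ll' al => -[->].
Qed.

Lemma decode_maximal : maximal_matching G (decode (p, phi)).
Proof.
rewrite maximal_matchingE decode_matching /=.
apply/forallP => x; apply/forallP => y; apply/implyP => /andP[exy xy].
have hit z : z \in [set x; y] -> (exists2 s, s \in decode (p, phi) & z \in s) ->
    [exists s in decode (p, phi), (x \in s) || (y \in s)].
  by move=> /set2P[]-> [s sD zs]; apply/existsP; exists s; rewrite sD zs ?orbT.
have : is_edge G [set x; y] by apply/is_edgeP; exists x, y.
case/Gedge_edge_cases => [[j j7 xyj]|[l l6 xyl]].
  have /and3P[j1 j2 _] := hend_lt6 j7.
  have /allP/(_ j) := (andP adm).2; rewrite mem_iota j7 => /(_ isT).
  by rewrite !negb_and !negbK => /or4P[c|c|c|c];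
    [apply: (hit (hvert (hend1 j))) | apply: (hit (hvert (hend2 j)))
    | apply: (hit (hvert (hend1 j))) | apply: (hit (hvert (hend2 j)))];
    rewrite ?xyj ?inE ?eqxx ?orbT //; apply: decode_covers; rewrite ?c ?orbT.
apply: (hit (hvert (att l))); first by rewrite xyl !inE eqxx.
by apply: decode_covers; rewrite ?ltn_ord // leafless_attF // orbT.
Qed.

Lemma decodeK : encode (decode (p, phi)) = (p, phi).
Proof.
rewrite /encode; congr pair.
  rewrite -[in RHS](pattern_ofK p); apply: eq_pattern_of => j j7; apply/idP/idP.
    rewrite in_decode => /orP[/imsetP[k pk /(hedge_inj j7 (ltn_ord k)) jk]|/imsetP[l pl jl]].
      by move: pk; rewrite inE -jk.
    by move: pl; rewrite inE => /andP[l6 _]; move: (hedge_neq_leaf_edge j7 l6); rewrite jl eqxx.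
  by move=> pj; rewrite in_decode; apply/orP; left; apply/imsetP; exists (Ordinal j7); rewrite ?inE.
apply/ffunP => v; rewrite ffunE; case: pickP => [x /andP[x6]|none].
  rewrite in_decode => /orP[/imsetP[k _ vxk]|/imsetP[l pl vxl]].
    have : x \in hedge k by rewrite -vxk !inE eqxx orbT.
    by move/(hedge_lt6 (ltn_ord k)); rewrite ltnNge x6.
  move: pl; rewrite inE => /andP[l6 /eqP al].
  have : x \in leaf_edge l by rewrite -vxl !inE eqxx orbT.
  rewrite leaf_in_leaf_edge // => /eqP xl; subst x.
  have : hvert v \in leaf_edge l by rewrite -vxl !inE eqxx.
  by rewrite hvert_in_leaf_edge ?ltn_ord // => /eqP/val_inj ->; rewrite al.
case vl: (phi v) => [l|] //; have /andP[l6 /eqP al] := choice_leaf vl.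
move: (none l); rewrite l6 -al -[[set _; l]]/(leaf_edge l) in_decode => /negP[].
by apply/orP; right; apply/imsetP; exists l; rewrite // inE l6 al vl eqxx.
Qed.

Lemma card_decode : #|decode (p, phi)| =
  #|[set j : 'I_7 | selected p j]| + #|[set v : 'I_6 | ~~ (covered p v || leafless v)]|.
Proof.
have disj : [disjoint [set hedge j | j : 'I_7 & selected p j] &
                     [set leaf_edge l | l : 'I_n & (6 <= l) && (phi (att l) == Some l)]].
  apply/pred0P => s /=; apply/negP => /andP[/imsetP[j _ ->] /imsetP[l]].
  by rewrite inE => /andP[l6 _] /eqP; rewrite (negbTE (hedge_neq_leaf_edge (ltn_ord j) l6)).
rewrite /decode cardsU (disjoint_setI0 disj) cards0 subn0 /=.
rewrite card_in_imset => [|j k _ _ /(hedge_inj (ltn_ord j) (ltn_ord k)) jk]; last exact: val_inj.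
congr addn; rewrite card_in_imset => [|l l']; last first.
  by rewrite inE => /andP[l6 _] _; apply: leaf_edge_inj.
rewrite -(card_in_imset (f := att)) => [|l l']; last first.
  by rewrite !inE => /andP[_ /eqP al] /andP[_ /eqP al'] ll'; move: al'; rewrite -ll' al => -[].
apply: eq_card => v; apply/imsetP/idP => [[l]|].
  by rewrite !inE => /andP[l6 /eqP al] ->; apply/negP => /choice_none; rewrite al.
rewrite inE => /choice_some[l vl /andP[l6 /eqP al]].
by exists l; rewrite // inE l6 al vl eqxx.
Qed.

End Decode.

Lemma sum_maximal_matchings (F : {set {set 'I_n}} -> nat) :
  \sum_(M | maximal_matching G M) F M = \sum_(q | code_ok q) F (decode q).
Proof.
rewrite (reindex_onto decode encode) => [|M]; last by case/andP => mM _; apply: encodeK.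
apply: eq_bigl => q; apply/andP/idP => [[maxM /eqP <-]|].
  by rewrite /code_ok encode_admissible ?encode_choices.
by case: q => p phi /andP[adm fam]; rewrite decodeK ?eqxx ?decode_maximal.
Qed.

Lemma card_leaf_choices p v : #|leaf_choices p v| = vertex_weight nleaves p v.
Proof.
rewrite /leaf_choices /vertex_weight; case: ifP => _; first exact: card1.
rewrite /nleaves -(card_imset _ (@Some_inj _)); apply: eq_card => -[x|].
  by rewrite (mem_imset _ _ (@Some_inj _)) !inE.
by rewrite inE; apply/esym/negP => /imsetP[].
Qed.

Lemma card_leaf_family p : #|family (leaf_choices p)| = pattern_weight nleaves p.
Proof.
rewrite card_family foldrE big_map big_enum /= -pattern_weightE.
by apply: eq_bigr => v _; rewrite card_leaf_choices.
Qed.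

Lemma card_maximal_matchings : #|[set M | maximal_matching G M]| = mm_count nleaves.
Proof.
rewrite -sum1_card (eq_bigl (maximal_matching G)) => [|M]; last by rewrite inE.
rewrite (sum_maximal_matchings (fun _ => 1)).
rewrite -(@pair_big_dep _ _ _ _ _ (admissible leafless)
  (fun p phi => phi \in family (leaf_choices p)) (fun _ _ => 1)) /=.
by apply: eq_bigr => p _; rewrite sum1_card card_leaf_family.
Qed.

Lemma sum_card_maximal_matchings : \sum_(M | maximal_matching G M) #|M| = mm_size_sum nleaves.
Proof.
rewrite sum_maximal_matchings.
rewrite (eq_bigr (fun q => pattern_size nleaves q.1)) => [|[p phi] /andP[adm fam]]; last first.
  by rewrite card_decode // pattern_sizeE.
rewrite -(@pair_big_dep _ _ _ _ _ (admissible leafless)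
  (fun p phi => phi \in family (leaf_choices p)) (fun p _ => pattern_size nleaves p)) /=.
by apply: eq_bigr => p _; rewrite sum_nat_const card_leaf_family mulnC.
Qed.

End Encoding.

(* Sort maximal matchings by whether they contain the bridge v3 w1.  On the triangle
   v1 v2 v3, with x, y, c pendant edges at v1, v2, v3, the matching restricts to one of
   [side_len x y] configurations if it contains the bridge (v1 v2 is matched, or some of
   v1, v2 carry pendant edges and each such vertex is matched to one of them) and to one of
   [side_open x y c] otherwise (v3 is matched to a pendant edge, to v1 or to v2).  The
   [_size] variants give the total number of edges of these configurations, not counting
   the edge at v3. *)
Definition side_len (x y : nat) : nat :=
  match x, y with 0, 0 => 1 | _, 0 => x.+1 | 0, _ => y.+1 | _, _ => (x * y).+1 end.
Definition side_len_size (x y : nat) : nat :=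
  match x, y with 0, 0 => 1 | _, 0 => x.+1 | 0, _ => y.+1 | _, _ => (2 * x * y).+1 end.
Definition side_free (x y : nat) : nat :=
  match x, y with 0, 0 => 2 | _, 0 => x.+1 | 0, _ => y.+1 | _, _ => x + y end.

Definition side_open (x y c : nat) : nat := c * side_len x y + side_free x y.
Definition side_open_size (x y c : nat) : nat := c * side_len_size x y + (x + y).

Definition mm_count_closed (x0 x1 c c' x4 x5 : nat) : nat :=
  side_len x0 x1 * side_len x4 x5 + side_open x0 x1 c * side_open x4 x5 c'.

Definition mm_size_sum_closed (x0 x1 c c' x4 x5 : nat) : nat :=
  side_len x0 x1 * side_len x4 x5 + side_len_size x0 x1 * side_len x4 x5 +
  side_len x0 x1 * side_len_size x4 x5 + 2 * (side_open x0 x1 c * side_open x4 x5 c') +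
  side_open_size x0 x1 c * side_open x4 x5 c' + side_open x0 x1 c * side_open_size x4 x5 c'.

Lemma mm_countE (f : nat -> nat) : 0 < f 2 -> 0 < f 3 ->
  mm_count f = mm_count_closed (f 0) (f 1) (f 2) (f 3) (f 4) (f 5).
Proof.
expand_patterns; case: (f 2) => [|c] // _; case: (f 3) => [|c'] // _.
by case: (f 0) => [|x0]; case: (f 1) => [|x1]; case: (f 4) => [|x4]; case: (f 5) => [|x5];
  rewrite /= /mm_count_closed /side_open /=; ring.
Qed.

Lemma mm_size_sumE (f : nat -> nat) : 0 < f 2 -> 0 < f 3 ->
  mm_size_sum f = mm_size_sum_closed (f 0) (f 1) (f 2) (f 3) (f 4) (f 5).
Proof.
expand_patterns; case: (f 2) => [|c] // _; case: (f 3) => [|c'] // _.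
by case: (f 0) => [|x0]; case: (f 1) => [|x1]; case: (f 4) => [|x4]; case: (f 5) => [|x5];
  rewrite /= /mm_size_sum_closed /side_open /side_open_size /=; ring.
Qed.

Lemma mm_count_star (f : nat -> nat) : 0 < f 2 -> (forall k, k != 2 -> f k = 0) ->
  mm_count f = 3 * f 2 + 7.
Proof.
move=> c0 off; expand_patterns; rewrite (off 0) ?(off 1) ?(off 3) ?(off 4) ?(off 5) //.
by case: (f 2) c0 => [|c] // _; rewrite /=; ring.
Qed.

Lemma mm_size_sum_star (f : nat -> nat) : 0 < f 2 -> (forall k, k != 2 -> f k = 0) ->
  mm_size_sum f = 9 * f 2 + 15.
Proof.
move=> c0 off; expand_patterns; rewrite (off 0) ?(off 1) ?(off 3) ?(off 4) ?(off 5) //.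
by case: (f 2) c0 => [|c] // _; rewrite /=; ring.
Qed.

Lemma side_len_le x y : side_len x y <= side_len_size x y.
Proof. by case: x y => [|x] [|y] //=; nia. Qed.

Definition side_surplus (x y c : nat) : int :=
  ((side_open x y c)%:Z - (side_open_size x y c)%:Z)%R.

(* The three shapes of a side: no pendant edges at v1, v2 (surplus 2), pendant edges at
   exactly one of them (surplus 1), or at both (nonpositive surplus). *)
Definition surplus_spec (s d : int) : Prop :=
  ([\/ s = 2 /\ 1 <= d, s = 1 /\ 3 <= d | s <= 0 /\ - s <= d])%R.

Lemma side_surplusP x y c : 0 < c ->
  surplus_spec (side_surplus x y c) (side_open_size x y c)%:Z.
Proof.
rewrite /surplus_spec /side_surplus /side_open /side_open_size => c0.
case: x y => [|x] [|y] /=; [apply: Or31 | apply: Or32 | apply: Or32 | apply: Or33]; nia.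
Qed.

Lemma side_surplus_eq2 x y c : side_surplus x y c = 2%R -> x + y = 0.
Proof. by rewrite /side_surplus /side_open /side_open_size; case: x y => [|x] [|y] /=; lia. Qed.

Lemma surplus_mul_le (s s' d d' : int) : surplus_spec s d -> surplus_spec s' d' ->
  ((s != 2) || (s' != 2) -> s * s' <= d * d')%R.
Proof. by case=> [[-> ?]|[-> ?]|[? ?]] [[-> ?]|[-> ?]|[? ?]] //=; nia. Qed.

Lemma three_mm_count_le_size_sum x0 x1 c c' x4 x5 :
  0 < c -> 0 < c' -> 0 < x0 + x1 + x4 + x5 ->
  3 * mm_count_closed x0 x1 c c' x4 x5 <= mm_size_sum_closed x0 x1 c c' x4 x5.
Proof.
move=> c0 c'0 outer.
have surplus_le : (side_surplus x0 x1 c * side_surplus x4 x5 c' <=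
                   (side_open_size x0 x1 c * side_open_size x4 x5 c')%:Z)%R.
  rewrite PoszM; apply: surplus_mul_le; try exact: side_surplusP.
  apply: contraTT outer; rewrite negb_or !negbK.
  by case/andP=> /eqP/side_surplus_eq2 + /eqP/side_surplus_eq2; lia.
move: surplus_le (side_len_le x0 x1) (side_len_le x4 x5).
rewrite -lez_nat /side_surplus /mm_size_sum_closed /mm_count_closed.
move: (side_len x0 x1) (side_len x4 x5) (side_len_size x0 x1) (side_len_size x4 x5).
move: (side_open x0 x1 c) (side_open x4 x5 c') (side_open_size x0 x1 c) (side_open_size x4 x5 c').
move=> u u' d d' l l' dl dl' surplus_le ldl ldl'.
have gap : ((l * l' + dl * l' + l * dl' + 2 * (u * u') + d * u' + u * d')%:Z -
            (3 * (l * l' + u * u'))%:Z =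
  (d * d')%:Z - (u%:Z - d%:Z) * (u'%:Z - d'%:Z) +
  (dl%:Z - l%:Z) * l'%:Z + l%:Z * (dl'%:Z - l'%:Z))%R.
  by rewrite !PoszD !PoszM; ring.
nia.
Qed.

Lemma mm_count_closed_gt0 x0 x1 c c' x4 x5 : 0 < mm_count_closed x0 x1 c c' x4 x5.
Proof. by rewrite addn_gt0 muln_gt0; case: x0 x1 x4 x5 => [|?] [|?] [|?] [|?]. Qed.

Lemma mm_two_stars c c' : (3 * (c + c') + 7) * mm_size_sum_closed 0 0 c c' 0 0 =
  (9 * (c + c') + 15) * mm_count_closed 0 0 c c' 0 0 + (3 * (c + c') + 13) * (c * c') + 2.
Proof. by rewrite /mm_size_sum_closed /mm_count_closed /side_open /side_open_size /=; ring. Qed.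

Lemma star_ratio_lt x0 x1 c c' x4 x5 (m := x0 + x1 + c + c' + x4 + x5) : 0 < c -> 0 < c' ->
  (9 * m + 15) * mm_count_closed x0 x1 c c' x4 x5 <
  (3 * m + 7) * mm_size_sum_closed x0 x1 c c' x4 x5.
Proof.
move=> c0 c'0; rewrite {}/m.
have [outer|outer0] := ltnP 0 (x0 + x1 + x4 + x5).
  have := three_mm_count_le_size_sum c0 c'0 outer.
  by have := mm_count_closed_gt0 x0 x1 c c' x4 x5; nia.
have [-> [-> [-> ->]]] : x0 = 0 /\ x1 = 0 /\ x4 = 0 /\ x5 = 0 by lia.
by rewrite !add0n !addn0 mm_two_stars; lia.
Qed.

Lemma sum_nleaves n' (att : 'I_n'.+1 -> 'I_6) :
  nleaves att 0 + nleaves att 1 + nleaves att 2 + nleaves att 3 + nleaves att 4 +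
  nleaves att 5 = #|[set x : 'I_n'.+1 | 6 <= x]|.
Proof.
rewrite -sum1_card (partition_big att xpredT) //=.
rewrite !big_ord_recr big_ord0 /= add0n /nleaves; congr (_ + _ + _ + _ + _ + _);
  by rewrite -sum1_card; apply: eq_bigl => x; rewrite !inE.
Qed.

Lemma nleaves_star n' k : nleaves (fun _ : 'I_n'.+1 => v3) k =
  if k == 2 then #|[set x : 'I_n'.+1 | 6 <= x]| else 0.
Proof.
rewrite /nleaves; have [_|_] := eqVneq k 2; first by apply: eq_card => x; rewrite !inE andbT.
by apply/eqP; rewrite cards_eq0; apply/eqP/setP => x; rewrite !inE andbF.
Qed.

Lemma nleaves_gt0 n' (att : 'I_n'.+1 -> 'I_6) (v : 'I_6) :
  (exists i : 'I_n'.+1, 6 <= i /\ att i = v) -> 0 < nleaves att v.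
Proof. by case=> i [i6 <-]; rewrite lt0n; apply/negbT; apply: leafless_attF. Qed.

Lemma ltr_nat_ratio (R : numFieldType) (a b c d : nat) : 0 < b -> 0 < d -> a * d < c * b ->
  (a%:R / b%:R < c%:R / d%:R :> R)%R.
Proof.
by move=> b0 d0 lt; rewrite ltr_pdivrMr ?ltr0n // mulrAC ltr_pdivlMr ?ltr0n // -!natrM ltr_nat.
Qed.

Theorem lemma4p3 (n : nat) (hn : (7 <= n)%N) (att : 'I_n -> 'I_6)
  (hv3 : exists i : 'I_n, (6 <= i)%N /\ att i = v3)
  (hw1 : exists j : 'I_n, (6 <= j)%N /\ att j = w1) :
  (avm (Tn1_33 n) < avm (Gedge att))%R.
Proof.
case: n hn att hv3 hw1 => [|n'] // hn att hv3 hw1; have hn6 : 6 <= n' by [].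
set star := fun _ : 'I_n'.+1 => v3; set m := #|[set x : 'I_n'.+1 | 6 <= x]|.
have c0 : 0 < nleaves att 2 := nleaves_gt0 hv3.
have c'0 : 0 < nleaves att 3 := nleaves_gt0 hw1.
have star2 : nleaves star 2 = m by rewrite nleaves_star.
have off_v3 k : k != 2 -> nleaves star k = 0 by move=> k2; rewrite nleaves_star (negbTE k2).
have m0 : 0 < m by rewrite /m -(sum_nleaves att); lia.
have [countT sizeT] : mm_count (nleaves star) = 3 * m + 7 /\
                      mm_size_sum (nleaves star) = 9 * m + 15.
  by rewrite -star2 mm_count_star ?mm_size_sum_star ?star2.
rewrite /avm /Tn1_33 -/star !(card_maximal_matchings hn6) !(sum_card_maximal_matchings hn6).
rewrite countT sizeT /m -(sum_nleaves att) (mm_countE c0 c'0) (mm_size_sumE c0 c'0).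
apply: ltr_nat_ratio; [lia | exact: mm_count_closed_gt0 |].
by rewrite [X in _ < X]mulnC; apply: star_ratio_lt.
Qed.
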